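(* Let $f:\mathbb{R}^n\to\mathbb{R}$ be bounded below and continuously differentiable with $\nabla f$ Lipschitz with constant $L_{\nabla f}$. Let $x\in\mathbb{R}^n$, $\Delta>0$, points $y_1,\ldots,y_p$ with $\|y_i-x\|\le\beta\Delta$ for some $\beta>0$ and all $i$, with $\hat F$ invertible, and let $m$ be the minimum Frobenius norm quadratic interpolation model of $f$ and $\ell_1,\ldots,\ell_p$ the associated minimum Frobenius norm Lagrange polynomials (see context). Suppose $\max_{y\in B(x,\Delta)}\sum_i|\ell_i(y)|\le\Lambda_1$ and $\max_{y\in B(x,\Delta)}\max_i|\ell_i(y)|\le\Lambda_\infty$. Then for all $y\in B(x,\Delta)$, $|m(y)-f(y)|\le\kappa_{\mathrm{mf}}\Delta^2$ and $\|\nabla m(y)-\nabla f(y)\|\le\kappa_{\mathrm{mg}}\Delta$, where $$\kappa_{\mathrm{mf}}=\frac{L_{\nabla f}+\kappa_H}{2}\beta^2\Lambda_1+\frac{L_{\nabla f}+\kappa_H}{2},\qquad\kappa_{\mathrm{mg}}=2\kappa_{\mathrm{mf}}+2\kappa_H,\qquad \kappa_H:=12L_{\nabla f}p\beta^2\Lambda_\infty.$$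
   Context: Here $n+2\le p\le(n+1)(n+2)/2-1$. Let $\hat s_i=(y_i-x)/\Delta$, $\hat M$ with rows $[1,\hat s_i^T]$, $\hat P_{ij}=\tfrac12(\hat s_i^T\hat s_j)^2$, $\hat F=\begin{bmatrix}\hat P&\hat M\\ \hat M^T&0\end{bmatrix}$. For data values $v_1,\ldots,v_p$, the minimum Frobenius norm interpolant is the quadratic $q(y)=c+g^T(y-x)+\tfrac12(y-x)^TH(y-x)$ with $H$ symmetric minimizing $\tfrac14\|H\|_F^2$ subject to $q(y_i)=v_i$ for all $i$; when $\hat F$ is invertible it is unique and obtained by solving $\hat F[\hat\lambda;c;\Delta g]=[v;0;0_n]$ and setting $H=\sum_i(\hat\lambda_i/\Delta^4)(y_i-x)(y_i-x)^T$. The model $m$ uses $v_i=f(y_i)$; the Lagrange polynomial $\ell_i$ uses $v_j=\delta_{ij}$. $B(x,\Delta)=\{y:\|y-x\|\le\Delta\}$. *)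

From HB Require Import structures.
From mathcomp Require Import all_boot all_order all_algebra.
From mathcomp Require Import reals.
Set Implicit Arguments. Unset Strict Implicit. Unset Printing Implicit Defensive.
Import Order.TTheory GRing.Theory Num.Theory.
Local Open Scope ring_scope.

Section Defs.
Variable R : realType.

Definition enorm (n : nat) (v : 'cV[R]_n) : R := Num.sqrt (\sum_i (v i 0) ^+ 2).

Definition frob2 (n : nat) (H : 'M[R]_n) : R := \sum_i \sum_j (H i j) ^+ 2.

Definition is_gradient (n : nat) (f : 'cV[R]_n -> R) (g : 'cV[R]_n) (z : 'cV[R]_n) : Prop :=
  forall eps : R, 0 < eps -> exists2 del : R, 0 < del &
    forall h : 'cV[R]_n, enorm h < del ->
      `| f (z + h) - f z - (g^T *m h) 0 0 | <= eps * enorm h.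

Definition qeval (n : nat) (x : 'cV[R]_n) (c : R) (g : 'cV[R]_n) (H : 'M[R]_n)
  (y : 'cV[R]_n) : R :=
  c + (g^T *m (y - x)) 0 0 + 2^-1 * (((y - x)^T *m H) *m (y - x)) 0 0.

(* gradient of q at y (H symmetric): g + H (y - x) *)
Definition qgrad (n : nat) (x : 'cV[R]_n) (g : 'cV[R]_n) (H : 'M[R]_n)
  (y : 'cV[R]_n) : 'cV[R]_n := g + H *m (y - x).

Definition mfn_interp (n p : nat) (x : 'cV[R]_n) (y : 'I_p -> 'cV[R]_n)
  (v : 'I_p -> R) (c : R) (g : 'cV[R]_n) (H : 'M[R]_n) : Prop :=
  [/\ H^T = H,
      (forall i, qeval x c g H (y i) = v i) &
      (forall c' g' H', H'^T = H' -> (forall i, qeval x c' g' H' (y i) = v i) ->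
         4^-1 * frob2 H <= 4^-1 * frob2 H')].

Definition shat (n p : nat) (x : 'cV[R]_n) (Delta : R) (y : 'I_p -> 'cV[R]_n)
  (i : 'I_p) : 'cV[R]_n := Delta^-1 *: (y i - x).

Definition Mhat (n p : nat) (x : 'cV[R]_n) (Delta : R) (y : 'I_p -> 'cV[R]_n)
  : 'M[R]_(p, 1 + n) :=
  \matrix_(i < p) row_mx (1 : 'M[R]_1) (shat x Delta y i)^T.

Definition Phat (n p : nat) (x : 'cV[R]_n) (Delta : R) (y : 'I_p -> 'cV[R]_n)
  : 'M[R]_p :=
  \matrix_(i, j) (2^-1 * (((shat x Delta y i)^T *m shat x Delta y j) 0 0) ^+ 2).

Definition Fhat (n p : nat) (x : 'cV[R]_n) (Delta : R) (y : 'I_p -> 'cV[R]_n)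
  : 'M[R]_(p + (1 + n)) :=
  block_mx (Phat x Delta y) (Mhat x Delta y) (Mhat x Delta y)^T 0.

End Defs.

From HB Require Import structures.
From mathcomp Require Import all_boot all_order all_algebra.
From mathcomp Require Import reals.
From mathcomp Require Import classical_sets functions topology normedtype derive.
From mathcomp Require Import ring lra zify.
Set Implicit Arguments. Unset Strict Implicit. Unset Printing Implicit Defensive.
Import Order.TTheory GRing.Theory Num.Theory.
Import numFieldNormedType.Exports.
Local Open Scope classical_set_scope.
Local Open Scope ring_scope.

(* Let r_i := f(y_i) - f(x) - grad f(x)^T (y_i - x) be the first-order Taylor
   residuals at the sample points; a Lipschitz gradient gives
   |r_i| <= L/2 (beta Delta)^2.  A symmetric interpolating Hessian has minimal
   Frobenius norm iff it is Frobenius-orthogonal to the Hessians of all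
   symmetric quadratics vanishing at the points, so the minimum Frobenius norm
   interpolant is linear in the data and exact on affine data; since Fhat is
   invertible it is unique, hence m = f(x) + grad f(x)^T (. - x) + sum_i r_i l_i.
   The value error is then at most sum_i |r_i| |l_i(y)| plus the Taylor
   residual at y.  For the gradient, a quadratic bounded by Lam on the ball has
   its linear part bounded by Lam and, by polarization, its Hessian form by
   8 Lam, so its gradient has norm at most 9 Lam / Delta there; this controls
   sum_i r_i grad l_i(y), while the Lipschitz constant controls
   grad f(y) - grad f(x). *)

Section Euclidean.
Variables (R : realType) (n : nat).
Implicit Types (u v w : 'cV[R]_n).

Definition dot u v : R := \sum_i u i 0 * v i 0.

Lemma dotE u v : (u^T *m v) 0 0 = dot u v.
Proof. by rewrite !mxE; apply: eq_bigr => i _; rewrite mxE. Qed.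

Lemma dotC u v : dot u v = dot v u.
Proof. by apply: eq_bigr => i _; rewrite mulrC. Qed.

Lemma dotDl u v w : dot (u + v) w = dot u w + dot v w.
Proof. by rewrite /dot -big_split; apply: eq_bigr => i _; rewrite mxE mulrDl. Qed.

Lemma dotZl (a : R) u w : dot (a *: u) w = a * dot u w.
Proof. by rewrite /dot mulr_sumr; apply: eq_bigr => i _; rewrite mxE mulrA. Qed.

Lemma dotNl u w : dot (- u) w = - dot u w.
Proof. by rewrite -scaleN1r dotZl mulN1r. Qed.

Lemma dotBl u v w : dot (u - v) w = dot u w - dot v w.
Proof. by rewrite dotDl dotNl. Qed.

Lemma dot0l w : dot 0 w = 0.
Proof. by rewrite -(scale0r 0) dotZl mul0r. Qed.

Lemma dotDr u v w : dot w (u + v) = dot w u + dot w v.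
Proof. by rewrite dotC dotDl !(dotC w). Qed.

Lemma dotZr (a : R) u w : dot w (a *: u) = a * dot w u.
Proof. by rewrite dotC dotZl dotC. Qed.

Lemma dotNr u w : dot w (- u) = - dot w u.
Proof. by rewrite dotC dotNl dotC. Qed.

Lemma dotBr u v w : dot w (u - v) = dot w u - dot w v.
Proof. by rewrite dotDr dotNr. Qed.

Lemma dot0r w : dot w 0 = 0.
Proof. by rewrite dotC dot0l. Qed.

Lemma dot_suml (I : finType) (F : I -> 'cV[R]_n) w :
  dot (\sum_i F i) w = \sum_i dot (F i) w.
Proof.
by elim/big_rec2: _ => [|i a b _ IH]; rewrite ?dot0l // dotDl IH.
Qed.

Lemma dot_sumr (I : finType) (F : I -> 'cV[R]_n) w :
  dot w (\sum_i F i) = \sum_i dot w (F i).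
Proof. by rewrite dotC dot_suml; apply: eq_bigr => i _; rewrite dotC. Qed.

Lemma dotvv_ge0 u : 0 <= dot u u.
Proof. by apply: sumr_ge0 => i _; rewrite -expr2 sqr_ge0. Qed.

Lemma dotvv_eq0 u : dot u u = 0 -> u = 0.
Proof.
move=> uu0; apply/matrixP => i j; rewrite (ord1 j) mxE.
have /eqP : u i 0 * u i 0 = 0.
  by apply: (psumr_eq0P _ uu0) => // k _; rewrite -expr2 sqr_ge0.
by rewrite mulf_eq0 orbb => /eqP.
Qed.

Lemma enormE u : enorm u = Num.sqrt (dot u u).
Proof. by rewrite /enorm /dot; congr Num.sqrt; apply: eq_bigr => i _; rewrite expr2. Qed.

Lemma enorm_ge0 u : 0 <= enorm u.
Proof. by rewrite enormE sqrtr_ge0. Qed.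

Lemma enorm0 : enorm (0 : 'cV[R]_n) = 0.
Proof. by rewrite enormE dot0l sqrtr0. Qed.

Lemma sqr_enorm u : enorm u ^+ 2 = dot u u.
Proof. by rewrite enormE sqr_sqrtr // dotvv_ge0. Qed.

Lemma enorm_le u (d : R) : 0 <= d -> (enorm u <= d) = (dot u u <= d ^+ 2).
Proof.
by move=> d_ge0; rewrite enormE -{1}(ger0_norm d_ge0) -sqrtr_sqr ler_sqrt ?sqr_ge0.
Qed.

Lemma enormZ (a : R) u : enorm (a *: u) = `|a| * enorm u.
Proof.
by rewrite !enormE dotZl dotZr mulrA -expr2 sqrtrM ?sqr_ge0 // sqrtr_sqr.
Qed.

Lemma enormN u : enorm (- u) = enorm u.
Proof. by rewrite -scaleN1r enormZ normrN1 mul1r. Qed.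

Lemma cauchy_schwarz u v : `|dot u v| <= enorm u * enorm v.
Proof.
have sqr_le : dot u v ^+ 2 <= dot u u * dot v v.
  have [vv0|vv_neq0] := eqVneq (dot v v) 0.
    by rewrite (dotvv_eq0 vv0) !dot0r expr0n mulr0.
  have vv_gt0 : 0 < dot v v by rewrite lt_def vv_neq0 dotvv_ge0.
  (* expand 0 <= |u - t v|^2 at the minimizing t *)
  set t := dot u v / dot v v.
  have tvv : t * dot v v = dot u v by rewrite /t divfK.
  have := dotvv_ge0 (u - t *: v).
  rewrite !(dotBl, dotBr, dotZl, dotZr) (dotC v u); nra.
by rewrite !enormE -sqrtrM ?dotvv_ge0 // -sqrtr_sqr ler_sqrt // mulr_ge0 ?dotvv_ge0.
Qed.

Lemma enormD u v : enorm (u + v) <= enorm u + enorm v.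
Proof.
rewrite enorm_le ?addr_ge0 ?enorm_ge0 // dotDl !dotDr (dotC v u) sqrrD !sqr_enorm.
have := ler_norm (dot u v); have := cauchy_schwarz u v; lra.
Qed.

Lemma enorm_sum (I : finType) (F : I -> 'cV[R]_n) :
  enorm (\sum_i F i) <= \sum_i enorm (F i).
Proof.
elim/big_rec2: _ => [|i a b _ IH]; first by rewrite enorm0.
by apply: le_trans (enormD _ _) _; rewrite lerD2l.
Qed.

Lemma enorm_sum_scale_le (I : finType) (r : I -> R) (G : I -> 'cV[R]_n) (rho C : R) :
  (forall i, `|r i| <= rho) -> (forall i, enorm (G i) <= C) ->
  enorm (\sum_i r i *: G i) <= #|I|%:R * (rho * C).
Proof.
move=> r_le G_le; apply: le_trans (enorm_sum _) _.
rewrite -sum1_card natr_sum mulr_suml; apply: ler_sum => i _.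
by rewrite enormZ mul1r ler_pM ?normr_ge0 ?enorm_ge0.
Qed.

End Euclidean.

Lemma lipschitz_ge0 (R : realType) (n m : nat) (F : 'cV[R]_n -> 'cV[R]_m) (L : R) :
  (0 < n)%N -> (forall u v, enorm (F u - F v) <= L * enorm (u - v)) -> 0 <= L.
Proof.
move=> n_gt0 F_lip; pose e : 'cV[R]_n := const_mx 1.
have e_gt0 : 0 < enorm e.
  rewrite enormE sqrtr_gt0 /dot (eq_bigr (fun=> 1)) => [|i _]; last by rewrite mxE mulr1.
  by rewrite sumr_const card_ord ltr0n.
by have := le_trans (enorm_ge0 _) (F_lip e 0); rewrite subr0 pmulr_lge0.
Qed.

Lemma norm_sum_mul_le (R : numDomainType) (I : finType) (r a : I -> R) (rho : R) :
  (forall i, `|r i| <= rho) -> `|\sum_i r i * a i| <= rho * \sum_i `|a i|.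
Proof.
move=> r_le; apply: le_trans (ler_norm_sum _ _ _) _.
by rewrite mulr_sumr; apply: ler_sum => i _; rewrite normrM ler_wpM2r.
Qed.

Section Quadratic.
Variables (R : realType) (n : nat) (x : 'cV[R]_n).
Implicit Types (a b z g : 'cV[R]_n) (H D : 'M[R]_n) (c k : R).

Definition qform H a : R := dot a (H *m a).

Lemma qevalE c g H z : qeval x c g H z = c + dot g (z - x) + 2^-1 * qform H (z - x).
Proof. by rewrite /qeval /qform dotE -mulmxA dotE. Qed.

Lemma qformD H D a : qform (H + D) a = qform H a + qform D a.
Proof. by rewrite /qform mulmxDl dotDr. Qed.

Lemma qformZ k H a : qform (k *: H) a = k * qform H a.
Proof. by rewrite /qform -scalemxAl dotZr. Qed.

Lemma qformB H D a : qform (H - D) a = qform H a - qform D a.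
Proof. by rewrite /qform mulmxBl dotBr. Qed.

Lemma qform_sum (I : finType) (F : I -> 'M[R]_n) a :
  qform (\sum_i F i) a = \sum_i qform (F i) a.
Proof. by rewrite /qform mulmx_suml dot_sumr. Qed.

Lemma qform0 a : qform 0 a = 0.
Proof. by rewrite /qform mul0mx dot0r. Qed.

Lemma qform0v H : qform H 0 = 0.
Proof. by rewrite /qform dot0l. Qed.

Lemma qformN H a : qform H (- a) = qform H a.
Proof. by rewrite /qform mulmxN dotNl dotNr opprK. Qed.

Lemma qformZv H k a : qform H (k *: a) = k ^+ 2 * qform H a.
Proof. by rewrite /qform -scalemxAr dotZl dotZr mulrA expr2. Qed.

Lemma dot_mulmx_sym H a b : H^T = H -> dot a (H *m b) = dot b (H *m a).
Proof.
move=> Hsym; rewrite -!dotE.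
have -> : (a^T *m (H *m b)) 0 0 = (a^T *m (H *m b))^T 0 0 by rewrite [RHS]mxE.
by rewrite !trmx_mul trmxK Hsym mulmxA.
Qed.

Lemma qform_polar H a b :
  H^T = H -> qform H (a + b) - qform H (a - b) = 4 * dot a (H *m b).
Proof.
move=> Hsym; rewrite /qform !mulmxDr !mulmxN !dotDl !dotDr !dotNl !dotNr.
by rewrite (dot_mulmx_sym b a Hsym); ring.
Qed.

Lemma qevalD c1 g1 H1 c2 g2 H2 z :
  qeval x (c1 + c2) (g1 + g2) (H1 + H2) z = qeval x c1 g1 H1 z + qeval x c2 g2 H2 z.
Proof. by rewrite !qevalE dotDl qformD; ring. Qed.

Lemma qevalB c1 g1 H1 c2 g2 H2 z :
  qeval x (c1 - c2) (g1 - g2) (H1 - H2) z = qeval x c1 g1 H1 z - qeval x c2 g2 H2 z.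
Proof. by rewrite !qevalE dotBl qformB; ring. Qed.

Lemma qevalZ k c g H z : qeval x (k * c) (k *: g) (k *: H) z = k * qeval x c g H z.
Proof. by rewrite !qevalE dotZl qformZ; ring. Qed.

Lemma qeval_lagrange (I : finType) c0 g0 (r : I -> R) lc lg lH z :
  qeval x (c0 + \sum_i r i * lc i) (g0 + \sum_i r i *: lg i) (\sum_i r i *: lH i) z
  = c0 + dot g0 (z - x) + \sum_i r i * qeval x (lc i) (lg i) (lH i) z.
Proof.
rewrite !qevalE dotDl dot_suml qform_sum.
under [in RHS]eq_bigr => i _ do rewrite -qevalZ qevalE.
by rewrite !big_split /= -mulr_sumr; ring.
Qed.

Lemma qgrad_lagrange (I : finType) g0 (r : I -> R) lg lH z :
  qgrad x (g0 + \sum_i r i *: lg i) (\sum_i r i *: lH i) z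
  = g0 + \sum_i r i *: qgrad x (lg i) (lH i) z.
Proof.
rewrite /qgrad mulmx_suml -addrA -big_split /=; congr (_ + _).
by apply: eq_bigr => i _; rewrite scalerDr scalemxAl.
Qed.

End Quadratic.

Section Frobenius.
Variables (R : realType) (n : nat).
Implicit Types (H D : 'M[R]_n).

Definition frob_dot H D : R := \sum_i \sum_j H i j * D i j.

Lemma frob2E H : frob2 H = frob_dot H H.
Proof. by apply: eq_bigr => i _; apply: eq_bigr => j _; rewrite expr2. Qed.

Lemma frob_dotC H D : frob_dot H D = frob_dot D H.
Proof. by apply: eq_bigr => i _; apply: eq_bigr => j _; rewrite mulrC. Qed.

Lemma frob_dotDl H1 H2 D : frob_dot (H1 + H2) D = frob_dot H1 D + frob_dot H2 D.
Proof.
rewrite /frob_dot -big_split; apply: eq_bigr => i _; rewrite -big_split.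
by apply: eq_bigr => j _; rewrite mxE mulrDl.
Qed.

Lemma frob_dotZl (k : R) H D : frob_dot (k *: H) D = k * frob_dot H D.
Proof.
rewrite /frob_dot mulr_sumr; apply: eq_bigr => i _; rewrite mulr_sumr.
by apply: eq_bigr => j _; rewrite mxE mulrA.
Qed.

Lemma frob_dotNl H D : frob_dot (- H) D = - frob_dot H D.
Proof. by rewrite -scaleN1r frob_dotZl mulN1r. Qed.

Lemma frob_dot_suml (I : finType) (F : I -> 'M[R]_n) D :
  frob_dot (\sum_i F i) D = \sum_i frob_dot (F i) D.
Proof.
elim/big_rec2: _ => [|i a b _ IH]; last by rewrite frob_dotDl IH.
by rewrite -(scale0r 0) frob_dotZl mul0r.
Qed.

Lemma frob2_ge0 H : 0 <= frob2 H.
Proof. by apply: sumr_ge0 => i _; apply: sumr_ge0 => j _; apply: sqr_ge0. Qed.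

Lemma frob2_eq0 H : frob2 H = 0 -> H = 0.
Proof.
move=> H0; apply/matrixP => i j; rewrite mxE.
have row0 : \sum_j H i j ^+ 2 = 0.
  by apply: (psumr_eq0P _ H0) => // k _; apply: sumr_ge0 => l _; apply: sqr_ge0.
have /eqP : H i j ^+ 2 = 0 by apply: (psumr_eq0P _ row0) => // k _; apply: sqr_ge0.
by rewrite sqrf_eq0 => /eqP.
Qed.

Lemma frob2DZ H D (t : R) :
  frob2 (H + t *: D) = frob2 H + 2 * t * frob_dot H D + t ^+ 2 * frob2 D.
Proof.
have frob_dotDr A B C : frob_dot A (B + C) = frob_dot A B + frob_dot A C.
  by rewrite frob_dotC frob_dotDl !(frob_dotC A).
have frob_dotZr k A B : frob_dot A (k *: B) = k * frob_dot A B.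
  by rewrite frob_dotC frob_dotZl frob_dotC.
rewrite !frob2E frob_dotDl !frob_dotDr !frob_dotZl !frob_dotZr (frob_dotC D H).
ring.
Qed.

End Frobenius.

Section MinimumFrobeniusNorm.
Variables (R : realType) (n p : nat) (x : 'cV[R]_n) (y : 'I_p -> 'cV[R]_n).

Lemma mfn_interp_orth v c g H c' g' D :
  mfn_interp x y v c g H -> D^T = D ->
  (forall i, qeval x c' g' D (y i) = 0) -> frob_dot H D = 0.
Proof.
case=> Hsym Hinterp Hmin Dsym D0.
have first_order (t : R) : 0 <= 2 * t * frob_dot H D + t ^+ 2 * frob2 D.
  have interp i : qeval x (c + t * c') (g + t *: g') (H + t *: D) (y i) = v i.
    by rewrite qevalD qevalZ D0 mulr0 addr0 Hinterp.
  have sym : (H + t *: D)^T = H + t *: D by rewrite linearD linearZ /= Hsym Dsym.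
  have := Hmin _ _ _ sym interp.
  rewrite frob2DZ; lra.
have D2_ge0 := frob2_ge0 D.
(* at this [t] the first-order condition reads [0 <= - t^2 (|D|^2 + 2)] *)
set t := - frob_dot H D / (frob2 D + 1).
have HD : frob_dot H D = - (t * (frob2 D + 1)).
  by rewrite /t divfK ?opprK // gt_eqF //; lra.
have t0 : t = 0.
  apply/eqP; rewrite -sqrf_eq0; apply/eqP.
  have := first_order t; rewrite HD.
  have := mulr_ge0 (sqr_ge0 t) D2_ge0; have := sqr_ge0 t; nra.
by rewrite HD t0 mul0r oppr0.
Qed.

Lemma mfn_interp_of_orth v c g H :
  H^T = H -> (forall i, qeval x c g H (y i) = v i) ->
  (forall c' g' D, D^T = D -> (forall i, qeval x c' g' D (y i) = 0) ->
     frob_dot H D = 0) ->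
  mfn_interp x y v c g H.
Proof.
move=> Hsym Hinterp Horth; split=> // c' g' H' H'sym H'interp.
have Dsym : (H' - H)^T = H' - H by rewrite linearB /= H'sym Hsym.
have HD : frob_dot H (H' - H) = 0.
  by apply: (Horth (c' - c) (g' - g)) => // i; rewrite qevalB Hinterp H'interp subrr.
have := frob2DZ H (H' - H) 1; rewrite scale1r addrC subrK HD.
have := frob2_ge0 (H' - H); lra.
Qed.

Lemma Mhat_mul_col (Delta dc : R) (dg : 'cV[R]_n) i : Delta != 0 ->
  (Mhat x Delta y *m col_mx dc%:M (Delta *: dg)) i 0 = dc + dot dg (y i - x).
Proof.
move=> Delta_neq0.
have -> : (Mhat x Delta y *m col_mx dc%:M (Delta *: dg)) i 0
        = row i (Mhat x Delta y *m col_mx dc%:M (Delta *: dg)) 0 0 by rewrite [RHS]mxE.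
rewrite row_mul rowK mul_row_col mul1mx mxE dotE /shat [dc%:M 0 0]mxE mulr1n.
by rewrite dotZl dotZr mulrA mulVf // mul1r dotC.
Qed.

(* Invertibility of [Fhat] is used only through the injectivity of its [Mhat]
   block: no nonzero affine function vanishes at all the points. *)
Lemma Fhat_unitmx_affine_eq0 (Delta c : R) (g : 'cV[R]_n) :
  Fhat x Delta y \in unitmx -> Delta != 0 ->
  (forall i, c + dot g (y i - x) = 0) -> c = 0 /\ g = 0.
Proof.
move=> Funit Delta_neq0 vanish.
set u := col_mx (c%:M : 'M[R]_1) (Delta *: g).
have Mu : Mhat x Delta y *m u = 0.
  by apply/matrixP => i j; rewrite (ord1 j) Mhat_mul_col // vanish mxE.
have Fu : Fhat x Delta y *m col_mx 0 u = 0.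
  by rewrite /Fhat mul_block_col !mulmx0 Mu mul0mx !addr0 col_mx0.
have : col_mx 0 u = col_mx 0 0 :> 'cV[R]_(p + (1 + n)).
  by rewrite col_mx0 -(mulKmx Funit (col_mx 0 u)) Fu mulmx0.
case/eq_col_mx => _; rewrite -col_mx0 => /eq_col_mx [c0 g0]; split.
  by have := congr1 (fun M : 'M[R]_1 => M 0 0) c0; rewrite !mxE mulr1n.
by move/eqP: g0; rewrite scaler_eq0 (negbTE Delta_neq0) => /eqP.
Qed.

Lemma mfn_interp_unique (Delta : R) v c1 g1 H1 c2 g2 H2 :
  Fhat x Delta y \in unitmx -> Delta != 0 ->
  mfn_interp x y v c1 g1 H1 -> mfn_interp x y v c2 g2 H2 ->
  [/\ c1 = c2, g1 = g2 & H1 = H2].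
Proof.
move=> Funit Delta_neq0 m1 m2.
have [H1sym interp1 _] := m1; have [H2sym interp2 _] := m2.
have vanish i : qeval x (c2 - c1) (g2 - g1) (H2 - H1) (y i) = 0.
  by rewrite qevalB interp1 interp2 subrr.
have Dsym : (H2 - H1)^T = H2 - H1 by rewrite linearB /= H1sym H2sym.
have eH : H1 = H2.
  apply/eqP; rewrite eq_sym -subr_eq0; apply/eqP/frob2_eq0.
  rewrite frob2E frob_dotDl frob_dotNl (mfn_interp_orth m1 Dsym vanish).
  by rewrite (mfn_interp_orth m2 Dsym vanish) subrr.
move: vanish; rewrite -eH subrr => vanish.
have [] := @Fhat_unitmx_affine_eq0 Delta (c2 - c1) (g2 - g1) Funit Delta_neq0.
  by move=> i; have := vanish i; rewrite qevalE qform0 mulr0 addr0.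
by move=> /eqP; rewrite subr_eq0 => /eqP -> /eqP; rewrite subr_eq0 => /eqP ->.
Qed.

End MinimumFrobeniusNorm.

Section LagrangeBasis.
Variables (R : realType) (n p : nat) (x : 'cV[R]_n) (y : 'I_p -> 'cV[R]_n).
Variables (lc : 'I_p -> R) (lg : 'I_p -> 'cV[R]_n) (lH : 'I_p -> 'M[R]_n).
Hypothesis lagrange : forall i,
  mfn_interp x y (fun j => if j == i then 1 else 0) (lc i) (lg i) (lH i).

Lemma mfn_interp_lagrange (v : 'I_p -> R) (c0 : R) (g0 : 'cV[R]_n) :
  let r j := v j - c0 - dot g0 (y j - x) in
  mfn_interp x y v (c0 + \sum_i r i * lc i) (g0 + \sum_i r i *: lg i)
    (\sum_i r i *: lH i).
Proof.
move=> r; apply: mfn_interp_of_orth.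
- rewrite raddf_sum /=; apply: eq_bigr => i _.
  by have [lHsym _ _] := lagrange i; rewrite linearZ /= lHsym.
- move=> j; rewrite qeval_lagrange (bigD1 j) //= big1 => [|i ij].
    by have [_ -> _] := lagrange j; rewrite eqxx /r; ring.
  by have [_ -> _] := lagrange i; rewrite eq_sym (negbTE ij) mulr0.
- move=> c' g' D Dsym D0; rewrite frob_dot_suml big1 // => i _.
  by rewrite frob_dotZl (mfn_interp_orth (lagrange i) Dsym D0) mulr0.
Qed.

End LagrangeBasis.

Section BoundedQuadratic.
Variables (R : realType) (n : nat) (x : 'cV[R]_n) (c : R) (g : 'cV[R]_n) (H : 'M[R]_n).
Variables (Lam Delta : R).
Hypotheses (Delta_gt0 : 0 < Delta) (Hsym : H^T = H).
Hypothesis q_bound : forall z, enorm (z - x) <= Delta -> `|qeval x c g H z| <= Lam.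

Let q_bound_pm b : enorm b <= Delta ->
  [/\ `|c + dot g b + 2^-1 * qform H b| <= Lam,
      `|c - dot g b + 2^-1 * qform H b| <= Lam & `|c| <= Lam].
Proof.
have centered u : enorm u <= Delta -> `|c + dot g u + 2^-1 * qform H u| <= Lam.
  by move=> u_le; rewrite -[u](addrK x) -qevalE; apply: q_bound; rewrite addrK.
move=> b_le; split; first exact: centered.
  by rewrite -qformN -dotNr; apply: centered; rewrite enormN.
by have := centered 0; rewrite dot0r qform0v mulr0 !addr0 enorm0 ltW //; apply.
Qed.

Lemma quad_linear_bound b : enorm b <= Delta -> `|dot g b| <= Lam.
Proof.
case/q_bound_pm; rewrite !ler_norml => /andP[? ?] /andP[? ?] _.
by apply/andP; split; lra.
Qed.

Lemma quad_qform_bound b : enorm b <= Delta -> `|qform H b| <= 4 * Lam.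
Proof.
case/q_bound_pm; rewrite !ler_norml => /andP[? ?] /andP[? ?] /andP[? ?].
by apply/andP; split; lra.
Qed.

Lemma quad_bilinear_bound a b : enorm a <= Delta -> enorm b <= Delta ->
  `|dot a (H *m b)| <= 8 * Lam.
Proof.
move=> a_le b_le.
have mid_le (u v : 'cV[R]_n) :
    enorm u <= Delta -> enorm v <= Delta -> enorm (2^-1 *: (u + v)) <= Delta.
  move=> u_le v_le; rewrite enormZ ger0_norm ?invr_ge0 //.
  by have := enormD u v; lra.
have mb_le : enorm (- b) <= Delta by rewrite enormN.
have := quad_qform_bound (mid_le _ _ a_le b_le).
have := quad_qform_bound (mid_le _ _ a_le mb_le).
have -> : dot a (H *m b) = 4^-1 * (qform H (a + b) - qform H (a - b)).
  by rewrite qform_polar // mulKf // pnatr_eq0.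
rewrite !qformZv !normrM !normfV !normr_nat.
by have := ler_normB (qform H (a + b)) (qform H (a - b)); lra.
Qed.

Lemma qgrad_bound z :
  enorm (z - x) <= Delta -> enorm (qgrad x g H z) <= 9 * Lam / Delta.
Proof.
move=> z_le; set G := qgrad x g H z.
have zero_le : enorm (0 : 'cV[R]_n) <= Delta by rewrite enorm0 ltW.
have Lam_ge0 : 0 <= Lam by have [_ _] := q_bound_pm zero_le; apply: le_trans.
rewrite ler_pdivlMr //.
have [G0|G_neq0] := eqVneq (enorm G) 0; first by rewrite G0 mul0r; lra.
have G_gt0 : 0 < enorm G by rewrite lt_def G_neq0 enorm_ge0.
(* test the gradient against the boundary point in its own direction *)
set w := (Delta / enorm G) *: G.
have w_le : enorm w <= Delta.
  by rewrite enormZ ger0_norm ?divfK ?gt_eqF // divr_ge0 ?enorm_ge0 ?ltW.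
have wG : dot w G = enorm G * Delta.
  by rewrite dotZl -sqr_enorm; field; rewrite gt_eqF.
have := quad_linear_bound w_le.
have := quad_bilinear_bound w_le z_le.
rewrite -wG /G /qgrad dotDr (dotC w g) => Hb Gb.
by apply: le_trans (ler_norm _) _; apply: le_trans (ler_normD _ _) _; lra.
Qed.

End BoundedQuadratic.

Section LipschitzGradient.
Variables (R : realType) (n : nat).
Implicit Types (f : 'cV[R]_n -> R) (gradf : 'cV[R]_n -> 'cV[R]_n).

Lemma is_gradientN f (g z : 'cV[R]_n) :
  is_gradient f g z -> is_gradient (fun u => - f u) (- g) z.
Proof.
move=> fg e e_gt0; have [d d_gt0 fd] := fg e e_gt0; exists d => // h hd.
by rewrite dotE dotNl -normrN; have := fd h hd; rewrite dotE; congr (`|_| <= _); ring.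
Qed.

Lemma is_derive_along f gradf (x h : 'cV[R]_n) (t : R) :
  (forall z, is_gradient f (gradf z) z) ->
  is_derive t 1 (fun s : R => f (x + s *: h)) (dot (gradf (x + t *: h)) h).
Proof.
move=> f_grad; set D := dot _ h; set g := fun s : R => f (x + s *: h).
have g_diffq : (fun s : R => s^-1 *: ((g \o shift t) (s *: 1) - g t)) @ 0^' --> D.
  apply/cvgrPdist_le => eps eps_gt0.
  set N := enorm h; have N_ge0 : 0 <= N := enorm_ge0 h.
  have eps'_gt0 : 0 < eps / (N + 1) by apply: divr_gt0; lra.
  have [del del_gt0 f_del] := f_grad (x + t *: h) _ eps'_gt0.
  rewrite /dnbhs /within /=; apply/nbhs_ballP; exists (del / (N + 1)) => /=.
    by apply: divr_gt0 => //; lra.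
  move=> s; rewrite /ball /= sub0r normrN => s_small s_neq0.
  have s_gt0 : 0 < `|s| by rewrite normr_gt0.
  have sh_small : enorm (s *: h) < del.
    by rewrite enormZ -/N; move: s_small; rewrite ltr_pdivlMr; nra.
  have := f_del _ sh_small; rewrite dotE dotZr enormZ -/N.
  have -> : x + t *: h + s *: h = x + (s%:A + t) *: h.
    by rewrite [s%:A]mulr1 scalerDl addrA (addrAC x).
  rewrite -/(g (s%:A + t)) -/(g t) -/D => taylor1.
  have -> : D - s^-1 *: (g (s%:A + t) - g t) = - s^-1 * (g (s%:A + t) - g t - s * D).
    by rewrite /GRing.scale /=; field.
  rewrite normrM normrN normfV ler_pdivrMl //; apply: le_trans taylor1 _.
  have -> : eps / (N + 1) * (`|s| * N) = `|s| * eps * (N / (N + 1)) by field; lra.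
  by apply: ler_piMr; [apply: mulr_ge0; lra | rewrite ler_pdivrMr; lra].
apply: DeriveDef; first exact: cvgP g_diffq.
exact: cvg_lim g_diffq.
Qed.

Lemma taylor_upper f gradf (L : R) (x h : 'cV[R]_n) :
  (forall z, is_gradient f (gradf z) z) ->
  (forall a b, enorm (gradf a - gradf b) <= L * enorm (a - b)) ->
  f (x + h) - f x - dot (gradf x) h <= L / 2 * dot h h.
Proof.
move=> f_grad grad_lip.
set D0 := dot (gradf x) h; set N := dot h h.
pose g : R -> R := fun s => f (x + s *: h).
pose psi : R -> R := (g - (D0 \*: @id R : R -> R)) - ((L / 2 * N) \*: (@id R) ^+ 2 : R -> R).
have psi_derive (s : R) : is_derive s 1 psi (dot (gradf (x + s *: h)) h - D0 - L * N * s).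
  have := is_derive_along x h s f_grad => f_derive.
  by apply: is_derive_eq; rewrite /GRing.scale /= expr1; field.
have psi_cont : {within `[0, 1], continuous psi}.
  by apply: derivable_within_continuous => s _; exact: (psi_derive s).(ex_derive).
have [c] := MVT ltr01 (fun s _ => psi_derive s) psi_cont.
rewrite in_itv /= => /andP[c_gt0 _].
have psiE s : psi s = f (x + s *: h) - D0 * s - L / 2 * N * s ^+ 2 by [].
rewrite !psiE scale0r addr0 scale1r => psi_diff.
have slope_le : dot (gradf (x + c *: h)) h - D0 <= L * N * c.
  rewrite /D0 -dotBl; apply: le_trans (ler_norm _) _.
  apply: le_trans (cauchy_schwarz _ _) _.
  apply: le_trans (ler_wpM2r (enorm_ge0 h) (grad_lip _ _)) _.
  by rewrite (addrC x) addrK enormZ gtr0_norm // /N -sqr_enorm expr2; lra.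
by move: psi_diff; rewrite expr0n /= !(mulr0, mulr1, subr0); lra.
Qed.

Lemma taylor_bound f gradf (L : R) (x z : 'cV[R]_n) :
  (forall z, is_gradient f (gradf z) z) ->
  (forall a b, enorm (gradf a - gradf b) <= L * enorm (a - b)) ->
  `|f z - f x - dot (gradf x) (z - x)| <= L / 2 * dot (z - x) (z - x).
Proof.
move=> f_grad grad_lip.
have upper := taylor_upper x (z - x) f_grad grad_lip.
have neg_lip a b : enorm (- gradf a - - gradf b) <= L * enorm (a - b).
  by rewrite -opprD enormN.
have lower := taylor_upper (f := fun u => - f u) x (z - x)
  (fun u => is_gradientN (f_grad u)) neg_lip.
rewrite (addrC x) subrK dotNl in upper lower.
by rewrite ler_norml; apply/andP; split; lra.
Qed.

Lemma taylor_bound_ball f gradf (L d : R) (x z : 'cV[R]_n) :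
  (forall z, is_gradient f (gradf z) z) ->
  (forall a b, enorm (gradf a - gradf b) <= L * enorm (a - b)) ->
  0 <= L -> 0 <= d -> enorm (z - x) <= d ->
  `|f z - f x - dot (gradf x) (z - x)| <= L / 2 * d ^+ 2.
Proof.
move=> f_grad grad_lip L_ge0 d_ge0 z_near.
apply: le_trans (taylor_bound x z f_grad grad_lip) _.
by rewrite ler_wpM2l ?divr_ge0 // -enorm_le.
Qed.

End LipschitzGradient.

Section LagrangeModelError.
Variables (R : realType) (n p : nat) (f : 'cV[R]_n -> R) (gradf : 'cV[R]_n -> 'cV[R]_n).
Variables (Lg : R) (x : 'cV[R]_n) (Delta : R).
Variables (lc : 'I_p -> R) (lg : 'I_p -> 'cV[R]_n) (lH : 'I_p -> 'M[R]_n) (Lam1 Laminf : R).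
Hypothesis f_grad : forall z, is_gradient f (gradf z) z.
Hypothesis grad_lip : forall a b, enorm (gradf a - gradf b) <= Lg * enorm (a - b).
Hypotheses (Lg_ge0 : 0 <= Lg) (Delta_gt0 : 0 < Delta).
Hypothesis lH_sym : forall i, (lH i)^T = lH i.
Hypothesis Lam1_bound : forall z, enorm (z - x) <= Delta ->
  \sum_i `|qeval x (lc i) (lg i) (lH i) z| <= Lam1.
Hypothesis Laminf_bound : forall z, enorm (z - x) <= Delta -> forall i,
  `|qeval x (lc i) (lg i) (lH i) z| <= Laminf.
Variables (r : 'I_p -> R) (rho : R).
Hypotheses (r_le : forall i, `|r i| <= rho) (rho_ge0 : 0 <= rho).

Lemma lagrange_model_value_error z : enorm (z - x) <= Delta ->
  `|f x + dot (gradf x) (z - x) + \sum_i r i * qeval x (lc i) (lg i) (lH i) z - f z|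
    <= rho * Lam1 + Lg / 2 * Delta ^+ 2.
Proof.
move=> z_near; set S := \sum_i _.
have S_le : `|S| <= rho * Lam1.
  exact: le_trans (norm_sum_mul_le _ r_le) (ler_wpM2l rho_ge0 (Lam1_bound z_near)).
have := taylor_bound_ball f_grad grad_lip Lg_ge0 (ltW Delta_gt0) z_near.
have -> : f x + dot (gradf x) (z - x) + S - f z
          = S - (f z - f x - dot (gradf x) (z - x)) by ring.
by move=> T_le; apply: le_trans (ler_normB _ _) _; apply: lerD.
Qed.

Lemma lagrange_model_grad_error z : enorm (z - x) <= Delta ->
  enorm (gradf x + \sum_i r i *: qgrad x (lg i) (lH i) z - gradf z)
    <= p%:R * (rho * (9 * Laminf / Delta)) + Lg * Delta.
Proof.
move=> z_near; set W := \sum_i _.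
have W_le : enorm W <= #|'I_p|%:R * (rho * (9 * Laminf / Delta)).
  apply: (enorm_sum_scale_le (G := fun i => qgrad x (lg i) (lH i) z) r_le) => i.
  by apply: (qgrad_bound Delta_gt0 (lH_sym i) _ z_near) => w w_near; apply: Laminf_bound.
rewrite card_ord in W_le.
have -> : gradf x + W - gradf z = W - (gradf z - gradf x).
  by rewrite opprB addrA (addrC W).
apply: le_trans (enormD _ _) _; rewrite enormN lerD //.
exact: le_trans (grad_lip z x) (ler_wpM2l Lg_ge0 z_near).
Qed.

End LagrangeModelError.

Lemma kappa_mf_dominates (R : realType) (Lg kH beta Lam1 Delta : R) :
  0 <= kH -> 0 <= Lam1 ->
  Lg / 2 * (beta * Delta) ^+ 2 * Lam1 + Lg / 2 * Delta ^+ 2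
    <= ((Lg + kH) / 2 * beta ^+ 2 * Lam1 + (Lg + kH) / 2) * Delta ^+ 2.
Proof.
move=> kH_ge0 Lam1_ge0; rewrite -subr_ge0.
have -> : ((Lg + kH) / 2 * beta ^+ 2 * Lam1 + (Lg + kH) / 2) * Delta ^+ 2
          - (Lg / 2 * (beta * Delta) ^+ 2 * Lam1 + Lg / 2 * Delta ^+ 2)
          = kH / 2 * ((beta * Delta) ^+ 2 * Lam1 + Delta ^+ 2) by field.
exact: mulr_ge0 (divr_ge0 kH_ge0 (ler0n _ 2))
  (addr_ge0 (mulr_ge0 (sqr_ge0 _) Lam1_ge0) (sqr_ge0 _)).
Qed.

Lemma kappa_mg_dominates (R : realType) (Lg kH beta Lam1 Delta : R) :
  0 <= Lg -> 0 <= kH -> 0 <= Lam1 -> 0 < Delta ->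
  3 / 8 * kH * Delta + Lg * Delta
    <= (2 * ((Lg + kH) / 2 * beta ^+ 2 * Lam1 + (Lg + kH) / 2) + 2 * kH) * Delta.
Proof.
move=> Lg_ge0 kH_ge0 Lam1_ge0 Delta_gt0; rewrite -subr_ge0.
have -> : (2 * ((Lg + kH) / 2 * beta ^+ 2 * Lam1 + (Lg + kH) / 2) + 2 * kH) * Delta
          - (3 / 8 * kH * Delta + Lg * Delta)
          = ((Lg + kH) * beta ^+ 2 * Lam1 + 21 / 8 * kH) * Delta by field.
exact: mulr_ge0 (addr_ge0 (mulr_ge0 (mulr_ge0 (addr_ge0 Lg_ge0 kH_ge0) (sqr_ge0 _))
  Lam1_ge0) (mulr_ge0 (divr_ge0 (ler0n _ 21) (ler0n _ 8)) kH_ge0)) (ltW Delta_gt0).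
Qed.

Theorem theorem6p8 (R : realType) (n p : nat)
  (hp : (n + 2 <= p <= ((n + 1) * (n + 2)) %/ 2 - 1)%N)
  (f : 'cV[R]_n -> R) (gradf : 'cV[R]_n -> 'cV[R]_n) (Lg : R)
  (f_lb : exists lb : R, forall z, lb <= f z)
  (f_grad : forall z, is_gradient f (gradf z) z)
  (grad_lip : forall a b, enorm (gradf a - gradf b) <= Lg * enorm (a - b))
  (x : 'cV[R]_n) (Delta beta : R) (hDelta : 0 < Delta) (hbeta : 0 < beta)
  (y : 'I_p -> 'cV[R]_n)
  (hy : forall i, enorm (y i - x) <= beta * Delta)
  (hF : Fhat x Delta y \in unitmx)
  (mc : R) (mg : 'cV[R]_n) (mH : 'M[R]_n)
  (hm : mfn_interp x y (fun i => f (y i)) mc mg mH)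
  (lc : 'I_p -> R) (lg : 'I_p -> 'cV[R]_n) (lH : 'I_p -> 'M[R]_n)
  (hl : forall i, mfn_interp x y (fun j => if j == i then 1 else 0)
                    (lc i) (lg i) (lH i))
  (Lam1 Laminf : R)
  (hLam1 : forall z, enorm (z - x) <= Delta ->
     \sum_i `| qeval x (lc i) (lg i) (lH i) z | <= Lam1)
  (hLaminf : forall z, enorm (z - x) <= Delta -> forall i,
     `| qeval x (lc i) (lg i) (lH i) z | <= Laminf) :
  let kH := 12 * Lg * p%:R * beta ^+ 2 * Laminf in
  let kmf := (Lg + kH) / 2 * beta ^+ 2 * Lam1 + (Lg + kH) / 2 in
  let kmg := 2 * kmf + 2 * kH in
  forall z, enorm (z - x) <= Delta ->
    `| qeval x mc mg mH z - f z | <= kmf * Delta ^+ 2 /\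
    enorm (qgrad x mg mH z - gradf z) <= kmg * Delta.
Proof.
move=> kH kmf kmg z z_near.
have [n_gt0 p_gt0] : (0 < n)%N /\ (0 < p)%N by case/andP: hp; lia.
have Lg_ge0 : 0 <= Lg := lipschitz_ge0 n_gt0 grad_lip.
have x_near : enorm (x - x) <= Delta by rewrite subrr enorm0 ltW.
have Laminf_ge0 : 0 <= Laminf := le_trans (normr_ge0 _) (hLaminf x x_near (Ordinal p_gt0)).
have Lam1_ge0 : 0 <= Lam1 := le_trans (sumr_ge0 _ (fun i _ => normr_ge0 _)) (hLam1 z z_near).
have kH_ge0 : 0 <= kH := mulr_ge0 (mulr_ge0 (mulr_ge0 (mulr_ge0 (ler0n _ 12) Lg_ge0)
  (ler0n _ p)) (sqr_ge0 beta)) Laminf_ge0.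
have bD_ge0 : 0 <= beta * Delta by rewrite ltW ?mulr_gt0.
have rho_ge0 : 0 <= Lg / 2 * (beta * Delta) ^+ 2 by rewrite mulr_ge0 ?divr_ge0 ?sqr_ge0.
have r_le i := taylor_bound_ball (x := x) (z := y i) f_grad grad_lip Lg_ge0 bD_ge0 (hy i).
have lH_sym i : (lH i)^T = lH i by case: (hl i).
have [-> -> ->] := mfn_interp_unique hF (lt0r_neq0 hDelta) hm
  (mfn_interp_lagrange hl (fun i => f (y i)) (f x) (gradf x)).
have value_err := lagrange_model_value_error f_grad grad_lip Lg_ge0 hDelta hLam1 r_le rho_ge0.
have grad_err := lagrange_model_grad_error grad_lip Lg_ge0 hDelta lH_sym hLaminf r_le.
rewrite qeval_lagrange qgrad_lagrange; split.
  exact: le_trans (value_err z z_near) (kappa_mf_dominates _ _ _ kH_ge0 Lam1_ge0).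
apply: le_trans (grad_err z z_near) _.
have -> : p%:R * (Lg / 2 * (beta * Delta) ^+ 2 * (9 * Laminf / Delta)) = 3 / 8 * kH * Delta.
  by rewrite /kH; field; rewrite lt0r_neq0.
exact: kappa_mg_dominates.
Qed.
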